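(* There is an absolute constant $C>0$ such that for every degree sequence $\mathbf d=(d_1,\ldots,d_n)$ and every $v\in[n]$, \[\mathbb P(\mathfrak t_n(v)=0)\le C\Big(d_v\,\frac{\mathbb E[\mathfrak s_n(v)]}{n}+d_v\,n\,\mathbb P(\mathfrak s_n(v)>n/2)\Big).\]
   Context: A degree sequence is $\mathbf d=(d_1,\ldots,d_n)\in\mathbb N_0^n$ with $\sum_j d_j=n$. Let $\mathfrak F(\mathbf d)=\{f:[n]\to[n]: |f^{-1}(\{i\})|=d_i\ \forall i\}$ and $F$ uniform on $\mathfrak F(\mathbf d)$. For $f:V\to V$, $v\in V$: six-length $\mathfrak s_f(v)=\min\{k\in\mathbb N: f^{(k)}(v)\in\{f^{(j)}(v):0\le j\le k-1\}\}$ ($f^{(k)}$ the $k$-fold composition, $f^{(0)}=\mathrm{id}$); tail-length $\mathfrak t_f(v)$ is the unique integer with $0\le\mathfrak t_f(v)<\mathfrak s_f(v)$ and $f^{(\mathfrak s_f(v))}(v)=f^{(\mathfrak t_f(v))}(v)$. $\mathfrak s_n(v)=\mathfrak s_F(v)$, $\mathfrak t_n(v)=\mathfrak t_F(v)$. *)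

From HB Require Import structures.
From mathcomp Require Import all_boot all_order all_algebra.
Set Implicit Arguments. Unset Strict Implicit. Unset Printing Implicit Defensive.
Import Order.TTheory GRing.Theory Num.Theory.

Section SixTail.
Variable T : finType.

Definition six_cand (f : T -> T) (v : T) (k : nat) : bool :=
  (0 < k) && (iter k f v \in traject f v k).

Lemma six_cand_ex (f : T -> T) (v : T) : exists k, six_cand f v k.
Proof. exists (order f v); rewrite /six_cand order_gt0; exact: looping_order. Qed.

Definition sixlen (f : T -> T) (v : T) : nat := ex_minn (six_cand_ex f v).

Definition taillen (f : T -> T) (v : T) : nat :=
  index (iter (sixlen f v) f v) (traject f v (sixlen f v)).
End SixTail.

Definition Fdeg (n : nat) (d : 'I_n -> nat) : {set {ffun 'I_n -> 'I_n}} :=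
  [set f : {ffun 'I_n -> 'I_n} | [forall i, #|[set x | f x == i]| == d i]].

Local Open Scope ring_scope.

Definition Pr (n : nat) (d : 'I_n -> nat) (P : pred {ffun 'I_n -> 'I_n}) : rat :=
  #|[set f in Fdeg d | P f]|%:R / #|Fdeg d|%:R.

Definition Ex (n : nat) (d : 'I_n -> nat) (X : {ffun 'I_n -> 'I_n} -> nat) : rat :=
  (\sum_(f in Fdeg d) (X f)%:R) / #|Fdeg d|%:R.

From mathcomp Require Import all_boot all_algebra fingroup perm.
From mathcomp Require Import zify ring.
Import GRing.Theory Num.Theory.

Set Implicit Arguments.
Unset Strict Implicit.
Unset Printing Implicit Defensive.

(* If v lies on a cycle of f, its cycle predecessor a = f^(s-1)(v) is a
   preimage of v.  Exchanging the images of a and of any w outside the first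
   s-1 iterates of v yields g with the same degree sequence, with g w = v and
   s_g >= s_f; since a is among the first s_g iterates of g, f is recovered
   from the triple (g, w, a).  When s_f <= n/2 there are at least n/2 choices
   of w, while there are at most d_v * sum_g s_g such triples.  Functions with
   s_f > n/2 are absorbed by the second term. *)

Section SixLength.
Variables (T : finType) (f : T -> T) (v : T).
Local Notation s := (sixlen f v).

Lemma sixlen_gt0 : 0 < s.
Proof. by rewrite /sixlen; case: ex_minnP => m /andP[]. Qed.

Lemma looping_sixlen : looping f v s.
Proof. by rewrite /sixlen; case: ex_minnP => m /andP[]. Qed.

Lemma sixlen_min m : 0 < m -> looping f v m -> s <= m.
Proof.
by move=> m_gt0 loop_m; rewrite /sixlen; case: ex_minnP => k _; apply; apply/andP.
Qed.

Lemma uniq_traject_sixlen : uniq (traject f v s).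
Proof.
have := sixlen_gt0; have := @sixlen_min; case: s => // s' s_min _.
rewrite looping_uniq; case: s' s_min => // s' s_min.
by apply/negP => /(s_min _ (ltn0Sn s')); rewrite ltnn.
Qed.

Lemma uniq_traject_le_sixlen k : uniq (traject f v k) -> k <= s.
Proof.
rewrite leqNgt; apply: contraL => lt_s_k.
by rewrite -(subnKC lt_s_k) trajectD cat_uniq looping_uniq looping_sixlen.
Qed.

Lemma uniq_traject_pred_sixlen : uniq (traject f v s.-1).
Proof.
move: uniq_traject_sixlen.
by rewrite -(prednK sixlen_gt0) trajectSr rcons_uniq => /andP[].
Qed.

Lemma iter_pred_sixlen_notin : iter s.-1 f v \notin traject f v s.-1.
Proof.
move: uniq_traject_sixlen.
by rewrite -(prednK sixlen_gt0) trajectSr rcons_uniq => /andP[].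
Qed.

Lemma taillen_eq0 : taillen f v = 0 -> f (iter s.-1 f v) = v.
Proof.
rewrite -iterS prednK ?sixlen_gt0 // /taillen.
by have := sixlen_gt0; case: s => // s' _ /=; case: eqP.
Qed.
End SixLength.

Lemma iter_comp_tperm (T : finType) (f : T -> T) (a w v : T) m :
  a \notin traject f v m -> w \notin traject f v m ->
  forall i, i <= m -> iter i (f \o tperm a w) v = iter i f v.
Proof.
move=> a_notin w_notin; elim=> [//|i IHi] lt_i_m.
have i_in : iter i f v \in traject f v m by apply/trajectP; exists i.
rewrite !iterS IHi ?(ltnW lt_i_m) //= tpermD //.
  by apply: contraNneq a_notin => ->.
by apply: contraNneq w_notin => ->.
Qed.

Section Switching.
Variables (n : nat) (d : 'I_n -> nat) (v : 'I_n).
Local Notation FT := {ffun 'I_n -> 'I_n}.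
Local Notation F := (Fdeg d).
Local Notation s f := (sixlen f v).
Implicit Types (f : FT) (w : 'I_n).

Definition switch (f : FT) (w : 'I_n) : FT :=
  [ffun x => f (tperm (iter (s f).-1 f v) w x)].

Lemma switch_Fdeg f w : f \in F -> switch f w \in F.
Proof.
rewrite !inE => /forallP f_deg; apply/forallP => i.
have -> : [set x | switch f w x == i] =
          tperm (iter (s f).-1 f v) w @^-1: [set x | f x == i].
  by apply/setP => x; rewrite !inE ffunE.
by rewrite card_preimset //; exact: perm_inj.
Qed.

Lemma iter_switch f w i : w \notin traject f v (s f).-1 -> i <= (s f).-1 ->
  iter i (switch f w) v = iter i f v.
Proof.
move=> w_notin le_i.
rewrite -(iter_comp_tperm (iter_pred_sixlen_notin f v) w_notin le_i).
by apply: eq_iter => x; rewrite ffunE.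
Qed.

Lemma sixlen_le_switch f w : w \notin traject f v (s f).-1 -> s f <= s (switch f w).
Proof.
move=> w_notin; apply: uniq_traject_le_sixlen.
suff -> : traject (switch f w) v (s f) = traject f v (s f) by exact: uniq_traject_sixlen.
apply/(@eq_from_nth _ v); rewrite !size_traject // => i lt_i.
by rewrite !nth_traject // iter_switch // -ltnS prednK ?sixlen_gt0.
Qed.

Lemma switch_at f w : taillen f v = 0 -> switch f w w = v.
Proof. by move=> /taillen_eq0 fa; rewrite ffunE tpermR. Qed.

Definition on_cycle := [set f in F | taillen f v == 0].

Definition switch_pairs := [set p : FT * 'I_n |
  (p.1 \in on_cycle) && (p.2 \notin traject p.1 v (s p.1).-1)].

Definition marked_preimages := [set q : FT * 'I_n * 'I_n |
  [&& q.1.1 \in F, q.1.1 q.1.2 == v & q.2 \in traject q.1.1 v (s q.1.1)]].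

Lemma card_switch_pairs_le : #|switch_pairs| <= #|marked_preimages|.
Proof.
pose sw p := (switch p.1 p.2, p.2, iter (s p.1).-1 p.1 v).
have sw_inj : {in switch_pairs &, injective sw}.
  move=> [f1 w1] [f2 w2] _ _ [eq_sw eq_w eq_a] /=; subst w2; congr pair.
  apply/ffunP => x.
  have := congr1 (fun g : FT => g (tperm (iter (s f1).-1 f1 v) w1 x)) eq_sw.
  by rewrite /= !ffunE -eq_a !tpermK.
rewrite -(card_in_imset sw_inj); apply/subset_leq_card/subsetP => q /imsetP[[f w]].
rewrite inE /= => /andP[/setIdP[fF /eqP f_cyc] w_notin] ->.
rewrite inE /= switch_Fdeg // switch_at //= -(iter_switch w_notin (leqnn _)).
rewrite eqxx; apply/trajectP; exists (s f).-1 => //.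
apply: leq_trans (sixlen_le_switch w_notin); by rewrite prednK ?sixlen_gt0.
Qed.

Lemma card_marked_preimages_le : #|marked_preimages| <= d v * \sum_(f in F) s f.
Proof.
have -> : #|marked_preimages| =
    \sum_(f in F) \sum_(w | f w == v) \sum_(a in traject f v (s f)) 1.
  rewrite !pair_big_dep -sum1_card; apply: eq_bigl => -[[f w] a].
  by rewrite inE andbA.
rewrite big_distrr /=; apply: leq_sum => f.
rewrite inE => /forallP/(_ v)/eqP <-.
apply: (@leq_trans (\sum_(w | f w == v) s f)).
  apply: leq_sum => w _; rewrite sum1_card -[leqRHS](size_traject f v).
  exact: card_size.
by rewrite sum_nat_const cardsE.
Qed.

Lemma card_switch_pairs_ge :
  n * #|[set f in on_cycle | 2 * s f <= n]| <= 2 * #|switch_pairs|.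
Proof.
have card_choices f : #|[pred w | w \notin traject f v (s f).-1]| = n - (s f).-1.
  have := cardC (mem (traject f v (s f).-1)).
  rewrite (card_uniqP (uniq_traject_pred_sixlen f v)) size_traject card_ord.
  by rewrite (@eq_card _ _ [predC traject f v (s f).-1]) //; lia.
have -> : #|switch_pairs| = \sum_(f in on_cycle) (n - (s f).-1).
  rewrite -(eq_bigr _ (fun f _ => card_choices f)).
  under eq_bigr do rewrite -sum1_card.
  by rewrite pair_big_dep -sum1_card; apply: eq_bigl => -[f w]; rewrite inE.
rewrite mulnC -sum_nat_const [in leqRHS](bigID (fun f => 2 * s f <= n)) /= mulnDr.
rewrite big_distrr (eq_bigl (fun f => (f \in on_cycle) && (2 * s f <= n))) => [|f]; last by rewrite inE.
apply: leq_trans (leq_addr _ _); apply: leq_sum => f /andP[_ short].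
change (n <= 2 * (n - (s f).-1)); have := sixlen_gt0 f v; lia.
Qed.

Lemma deg_gt0_of_on_cycle f : f \in on_cycle -> 0 < d v.
Proof.
move=> /setIdP[+ /eqP/taillen_eq0 f_pred]; rewrite inE => /forallP/(_ v)/eqP <-.
by apply/card_gt0P; exists (iter (s f).-1 f v); rewrite inE f_pred.
Qed.

Lemma card_on_cycle_le : n * #|on_cycle| <=
  2 * d v * \sum_(f in F) s f + 2 * d v * n * n * #|[set f in F | n < 2 * s f]|.
Proof.
have [->|[f f_cyc]] := set_0Vmem on_cycle; first by rewrite cards0 muln0.
have dv_gt0 := deg_gt0_of_on_cycle f_cyc.
set S := \sum_(f in F) s f; set L := [set f in F | n < 2 * s f].
have short_long : #|on_cycle| <= #|[set f in on_cycle | 2 * s f <= n]| + #|L|.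
  apply: leq_trans (leq_card_setU _ _).1; apply/subset_leq_card/subsetP => g g_cyc.
  rewrite in_setU; apply/orP; move: (g_cyc) => /setIdP[gF _].
  by case: (leqP (2 * s g) n) => h; [left | right]; rewrite inE ?g_cyc ?gF h.
have short_le : n * #|[set f in on_cycle | 2 * s f <= n]| <= 2 * (d v * S).
  apply: leq_trans card_switch_pairs_ge _; rewrite leq_mul2l /=.
  exact: leq_trans card_switch_pairs_le card_marked_preimages_le.
have long_le : n * #|L| <= 2 * d v * n * n * #|L|.
  have nn : n <= n * n by case: (posnP n) => [-> | /leq_pmulr].
  apply: leq_mul => //; apply: leq_trans nn _.
  by rewrite leq_mul2r leq_pmull ?orbT // muln_gt0 dv_gt0.
nia.
Qed.
End Switching.

Local Open Scope ring_scope.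

Theorem lemma3p13 :
  exists C : rat, 0 < C /\
  forall (n : nat) (d : 'I_n -> nat), (\sum_(i < n) d i)%N = n ->
  forall v : 'I_n,
    Pr d (fun f => taillen f v == 0%N) <=
    C * ((d v)%:R * Ex d (fun f => sixlen f v) / n%:R
         + (d v)%:R * n%:R * Pr d (fun f => (n%:R / 2 : rat) < (sixlen f v)%:R)).
Proof.
exists 2; split=> // n d _ v; rewrite /Pr /Ex -natr_sum.
have n_gt0 : (0 < n)%N by case: n v {d} => [[]|].
have -> : [set f in Fdeg d | n%:R / 2 < (sixlen f v)%:R :> rat] =
          [set f in Fdeg d | n < 2 * sixlen f v]%N.
  by apply/setP => f; rewrite !inE ltr_pdivrMr // -natrM ltr_nat mulnC.
have [->|N_gt0] := posnP #|Fdeg d|; first by rewrite invr0 !(mulr0, mul0r, addr0).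
rewrite -/(on_cycle d v) ler_pdivrMr ?ltr0n //.
set S := (\sum_(f in Fdeg d) sixlen f v)%N.
set L := [set f in Fdeg d | n < 2 * sixlen f v]%N.
have -> : 2 * ((d v)%:R * (S%:R / #|Fdeg d|%:R) / n%:R
                + (d v)%:R * n%:R * (#|L|%:R / #|Fdeg d|%:R)) * #|Fdeg d|%:R
          = (2 * d v * S + 2 * d v * n * n * #|L|)%:R / n%:R :> rat.
  by rewrite natrD !natrM; field; rewrite !pnatr_eq0 -!lt0n n_gt0 N_gt0.
by rewrite ler_pdivlMr ?ltr0n // -natrM ler_nat mulnC card_on_cycle_le.
Qed.
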